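(* Let $M$ be a matroid flock on a finite set $E$, let $g=g^M$ and $f:=g^\bullet$, and let $\alpha,\omega\in\mathbb{Z}^E$. The following are equivalent: (1) $\omega^T\alpha=f(\omega)+g(\alpha)$; (2) $\omega=e_B$ for some basis $B$ of $M_\alpha$.
   Context: $e_I:=\sum_{i\in I}e_i$ ($e_i$ unit vectors), $\mathbf{1}:=e_E$. A matroid flock of rank $d$ on $E$ is a map $M$ assigning to each $\alpha\in\mathbb{Z}^E$ a matroid $M_\alpha$ on $E$ of rank $d$ with (MF1) $M_\alpha/i=M_{\alpha+e_i}\setminus i$ for all $\alpha$, $i$ (contraction, deletion); and (MF2) $M_\alpha=M_{\alpha+\mathbf{1}}$. With $r_\alpha$ the rank function of $M_\alpha$, $g^M$ is the unique function $g:\mathbb{Z}^E\to\mathbb{Z}$ with $g(0)=0$ and $g(\alpha+e_I)=g(\alpha)+r_\alpha(I)$ for all $\alpha,I$. For $h:\mathbb{Z}^E\to\mathbb{Z}\cup\{\infty\}$ with some finite value, the Legendre–Fenchel dual is $h^\bullet(x):=\sup\{x^Ty-h(y):y\in\mathbb{Z}^E\}$. *)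

From Stdlib Require Import ClassicalEpsilon.
From mathcomp Require Import all_boot all_order all_algebra.
Set Implicit Arguments. Unset Strict Implicit. Unset Printing Implicit Defensive.
Import Order.TTheory GRing.Theory Num.Theory.
Local Open Scope ring_scope.

Section Defs.
Variable E : finType.

Definition zvec := {ffun E -> int}.

Definition eI (I : {set E}) : zvec := [ffun i => ((i \in I) : nat)%:Z].
Definition one_vec : zvec := eI setT.
Definition eunit (i : E) : zvec := eI [set i].
Definition vadd (a b : zvec) : zvec := [ffun i => a i + b i].
Definition zero_vec : zvec := [ffun _ => 0].
Definition dot (x y : zvec) : int := \sum_(i : E) x i * y i.

Definition is_matroid (Bs : {set {set E}}) : Prop :=
  Bs != set0 /\
  forall B1 B2, B1 \in Bs -> B2 \in Bs -> forall x, x \in B1 :\: B2 ->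
    exists2 y, y \in B2 :\: B1 & (B1 :\ x) :|: [set y] \in Bs.

Definition mrank (Bs : {set {set E}}) (I : {set E}) : nat :=
  (\max_(B in Bs) #|I :&: B|)%N.

(** Deletion M \ i and contraction M / i, both matroids on E \ {i},
    represented by their sets of bases (subsets of E \ {i}). *)
Definition mdelete (Bs : {set {set E}}) (i : E) : {set {set E}} :=
  if [forall B in Bs, i \in B] (* i coloop *)
  then [set B :\ i | B in Bs]
  else [set B in Bs | i \notin B].
Definition mcontract (Bs : {set {set E}}) (i : E) : {set {set E}} :=
  if [forall B in Bs, i \notin B] (* i loop *)
  then Bs
  else [set B :\ i | B in [set B in Bs | i \in B]].

Definition matroid_flock (d : nat) (M : zvec -> {set {set E}}) : Prop :=
  (forall a, is_matroid (M a) /\ forall B, B \in M a -> #|B| = d) /\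
  (forall a i, mcontract (M a) i = mdelete (M (vadd a (eunit i))) i) /\
  (forall a, M a = M (vadd a one_vec)).

Definition is_gM (M : zvec -> {set {set E}}) (g : zvec -> int) : Prop :=
  g zero_vec = 0 /\
  forall a (I : {set E}), g (vadd a (eI I)) = g a + (mrank (M a) I)%:Z.

Definition is_LF_sup (h : zvec -> int) (x : zvec) (v : int) : Prop :=
  (forall y, dot x y - h y <= v) /\
  (forall u, (forall y, dot x y - h y <= u) -> v <= u).

(** h^•(x) in Z ∪ {∞}, with None standing for +∞
    (for integer-valued h, the sup is either attained-bounded or +∞). *)
Definition LFdual (h : zvec -> int) (x : zvec) : option int :=
  match excluded_middle_informative (exists v, is_LF_sup h x v) with
  | left H => Some (proj1_sig (constructive_indefinite_description _ H))
  | right _ => None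
  end.

End Defs.

(** Both directions rest on the fact that a basis [B] of [M_alpha] is a
    subgradient of [g] at [alpha]: [g y >= g alpha + e_B^T (y - alpha)].  By the
    shift invariance (MF2), which only adds [d] to [g] per unit shift, one may
    assume [y <= alpha]; then [alpha] is reached from [y] by adding unit vectors
    one at a time, always at a coordinate where the remaining difference is
    largest.  Axiom (MF1) relates the bases of consecutive matroids on the way,
    and the exchange axiom keeps the weight of the tracked basis under control.
    Conversely, if [alpha] attains the supremum defining [f omega], comparing
    with [alpha + e_I] and [alpha - e_I] gives [r_a(I) <= omega(I) <= r_alpha(I)]
    for all [I] (and some [a]); singletons force [omega] to be a 0/1 vector
    [e_B], [I = B] makes [B] independent in [M_alpha], and [I = E] gives
    [|B| >= d]. *)

From mathcomp Require Import all_boot all_order all_algebra.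
From mathcomp Require Import zify.
From Stdlib Require Import ClassicalEpsilon.
Import Order.TTheory GRing.Theory Num.Theory.
Set Implicit Arguments. Unset Strict Implicit.
Local Open Scope ring_scope.

Section Vectors.
Variable E : finType.
Implicit Types (B I : {set E}) (a b x y : zvec E).

Lemma dotC x y : dot x y = dot y x.
Proof. by apply: eq_bigr => j _; rewrite mulrC. Qed.

Lemma dot_vaddr x a b : dot x (vadd a b) = dot x a + dot x b.
Proof. by rewrite /dot -big_split; apply: eq_bigr => j _; rewrite ffunE mulrDr. Qed.

Lemma dot_eIl B x : dot (eI B) x = \sum_(j in B) x j.
Proof.
rewrite /dot [RHS]big_mkcond; apply: eq_bigr => j _; rewrite ffunE.
by case: (j \in B); rewrite ?mul1r ?mul0r.
Qed.

Lemma dot_onel x : dot (one_vec E) x = \sum_j x j.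
Proof. by apply: eq_bigr => j _; rewrite ffunE in_setT mul1r. Qed.

Lemma dot_eunitr x i : dot x (eunit i) = x i.
Proof. by rewrite dotC dot_eIl big_set1. Qed.

Lemma dot_eI B I : dot (eI B) (eI I) = #|B :&: I|%:Z.
Proof.
rewrite dot_eIl (eq_bigr (fun j => ((j \in I) : nat)%:Z)) => [|j _]; last by rewrite ffunE.
rewrite -(big_morph Posz PoszD (erefl (Posz 0))) -big_mkcondr sum1_card.
by congr Posz; apply: eq_card => j; rewrite !inE.
Qed.

End Vectors.

Section LegendreFenchel.
Variable E : finType.
Implicit Types (h : zvec E -> int) (x a : zvec E).

Definition LF_argmax h x a : Prop := forall y, dot x y - h y <= dot x a - h a.

Lemma LFdual_attainedP h x a :
  Some (dot x a) = omap (fun v => v + h a) (LFdual h x) <-> LF_argmax h x a.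
Proof.
rewrite /LFdual; case: excluded_middle_informative => [sup_ex|no_sup].
  case: constructive_indefinite_description => v [v_ub v_least] /=; split.
    by case=> xa y; rewrite xa addrK.
  by move=> a_max; congr Some; have := v_least _ a_max; have := v_ub a; lia.
split=> // a_max; case: no_sup; by exists (dot x a - h a); split.
Qed.

End LegendreFenchel.

Section Rank.
Variables (E : finType) (Bs : {set {set E}}).
Implicit Types (B I : {set E}).

Lemma mrank_le_card I : (mrank Bs I <= #|I|)%N.
Proof. by apply/bigmax_leqP => B _; apply/subset_leq_card/subsetIl. Qed.

Lemma mrank_attained I : Bs != set0 -> exists2 B, B \in Bs & mrank Bs I = #|I :&: B|.
Proof. by rewrite -card_gt0 => /(eq_bigmax_cond (fun B => #|I :&: B|)) [B]; exists B. Qed.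

Lemma independent_spanning_basis d I :
  Bs != set0 -> (forall B, B \in Bs -> #|B| = d) ->
  (#|I| <= mrank Bs I)%N -> (d <= #|I|)%N -> I \in Bs.
Proof.
move=> Bs_nz card_Bs; have [B HB ->] := mrank_attained I Bs_nz => I_indep d_le.
have IsubB : I \subset B by apply/setIidPl/eqP; rewrite eqEcard subsetIl.
suff -> : I = B by [].
by apply/eqP; rewrite eqEcard IsubB (card_Bs _ HB).
Qed.

End Rank.

Section Flock.
Variables (E : finType) (d : nat) (M : zvec E -> {set {set E}}).
Hypothesis flock : matroid_flock d M.
Implicit Types (a c y : zvec E) (B I : {set E}).

Lemma card_basis a B : B \in M a -> #|B| = d.
Proof. by case: flock => H _; case: (H a) => _; apply. Qed.

Lemma bases_neq0 a : M a != set0.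
Proof. by case: flock => H _; case: (H a) => [[]]. Qed.

Lemma basis_exchange a B1 B2 x : B1 \in M a -> B2 \in M a -> x \in B1 :\: B2 ->
  exists2 y, y \in B2 :\: B1 & (B1 :\ x) :|: [set y] \in M a.
Proof. by case: flock => H _; case: (H a) => [[_ exch] _] HB1 HB2; apply: exch. Qed.

Lemma contract_delete c i : mcontract (M c) i = mdelete (M (vadd c (eunit i))) i.
Proof. by case: flock => _ []. Qed.

Lemma mrankT a : mrank (M a) setT = d.
Proof. by have [B HB ->] := mrank_attained setT (bases_neq0 a); rewrite setTI (card_basis HB). Qed.

Lemma basis_setD1_notin a a' B i : B \in M a -> i \in B -> B :\ i \notin M a'.
Proof.
move=> HB iB; apply/negP => /card_basis; have := card_basis HB.
by rewrite (cardsD1 i B) iB; lia.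
Qed.

Lemma basis_shift_nonloop c i B0 B : B0 \in M c -> i \in B0 ->
  B \in M (vadd c (eunit i)) -> i \in B /\ B \in M c.
Proof.
move=> HB0 iB0 HB; have := contract_delete c i.
have -> : mcontract (M c) i = [set B :\ i | B in [set B in M c | i \in B]].
  by rewrite /mcontract ifF //; apply/negbTE/forall_inPn; exists B0; rewrite ?negbK.
rewrite /mdelete; case: ifP => [/forall_inP all_i | _] Edel.
  have iB := all_i _ HB; split=> //.
  have : B :\ i \in [set B :\ i | B in M (vadd c (eunit i))] by apply: imset_f.
  rewrite -Edel => /imsetP [B1]; rewrite inE => /andP [HB1 iB1] EB.
  by rewrite -(setD1K iB) EB setD1K.
have : B0 :\ i \in [set B :\ i | B in [set B in M c | i \in B]].
  by apply: imset_f; rewrite inE HB0 iB0.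
by rewrite Edel inE (negbTE (basis_setD1_notin _ HB0 iB0)).
Qed.

Lemma basis_shift_loop c i B : (forall B0, B0 \in M c -> i \notin B0) ->
  B \in M (vadd c (eunit i)) ->
  (i \notin B -> B \in M c) /\
  (i \in B -> exists2 y, y \notin B & B :\ i :|: [set y] \in M c).
Proof.
move=> i_loop HB; have := contract_delete c i.
rewrite /mcontract (introT forall_inP i_loop) /mdelete.
case: ifP => [/forall_inP all_i | /negbT/forall_inPn [B2 HB2 iB2]] Edel.
  have/negP[] := basis_setD1_notin c HB (all_i _ HB).
  by rewrite Edel; apply: imset_f.
have to_c B1 : B1 \in M (vadd c (eunit i)) -> i \notin B1 -> B1 \in M c.
  by move=> HB1 iB1; rewrite Edel inE HB1.
split=> [|iB]; first exact: to_c.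
have [y] : exists2 y, y \in B2 :\: B & B :\ i :|: [set y] \in M (vadd c (eunit i)).
  by apply: basis_exchange; rewrite // inE iB2 iB.
rewrite inE => /andP [yB yB2] HB'; exists y => //; apply: to_c => //.
by rewrite !inE eqxx /=; apply/eqP => iy; rewrite iy yB2 in iB2.
Qed.

(* [i] is a heaviest coordinate of [v + e_i]: when [i] is a loop of [M c] and
   the exchange trades [i] for [y], the bound [v y <= v i + 1] pays for it. *)
Lemma flock_step c i (v : zvec E) B : (forall j, v j <= v i + 1) ->
  B \in M (vadd c (eunit i)) ->
  exists2 B', B' \in M c &
    dot (eI B') v + (mrank (M c) [set i])%:Z <= dot (eI B) (vadd v (eunit i)).
Proof.
move=> v_max HB; rewrite dot_vaddr dot_eunitr ffunE.
case: (boolP [exists B0 in M c, i \in B0]) => [/exists_inP [B0 HB0 iB0] | /exists_inPn i_loop].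
  have [-> HBc] := basis_shift_nonloop HB0 iB0 HB; exists B => //.
  by have := mrank_le_card (M c) [set i]; rewrite cards1; lia.
have -> : mrank (M c) [set i] = 0%N.
  have [B1 HB1 ->] := mrank_attained [set i] (bases_neq0 c).
  by apply/eqP; rewrite cards_eq0 setI_eq0 disjoints1 i_loop.
have [to_c exchange_i] := basis_shift_loop i_loop HB.
case: (boolP (i \in B)) => iB; last by exists B; rewrite ?to_c //=; lia.
have [y yB HB'] := exchange_i iB; exists (B :\ i :|: [set y]) => //.
rewrite !dot_eIl setUC big_setU1 ?inE ?negb_and ?yB ?orbT //= (big_setD1 i iB) /=.
by have := v_max y; lia.
Qed.

Variable g : zvec E -> int.
Hypothesis gM : is_gM M g.

Lemma g_add_const y (k : nat) : g [ffun j => y j + k%:Z] = g y + (k * d)%:Z.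
Proof.
elim: k => [|k IH].
  by rewrite mul0n addr0; congr g; apply/ffunP => j; rewrite ffunE addr0.
have -> : [ffun j => y j + k.+1%:Z] = vadd [ffun j => y j + k%:Z] (one_vec E).
  by apply/ffunP => j; rewrite !ffunE in_setT /= -addrA -PoszD addn1.
by rewrite (proj2 gM) mrankT IH; lia.
Qed.

Lemma g_increment_le (w : zvec E) : (forall j, 0 <= w j) ->
  forall y B, B \in M (vadd y w) -> g (vadd y w) <= g y + dot (eI B) w.
Proof.
move=> w_ge0; have [n] : exists n : nat, \sum_j w j = n%:Z.
  by exists (absz (\sum_j w j)); rewrite gez0_abs // sumr_ge0.
elim: n w w_ge0 => [|n IH] w w_ge0 sum_w y B.
  have w0 j : w j = 0 := psumr_eq0P (fun j _ => w_ge0 j) sum_w isT.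
  have -> : vadd y w = y by apply/ffunP => j; rewrite ffunE w0 addr0.
  by move=> _; rewrite dot_eIl big1 ?addr0.
have [i0 /andP [_ w_i0]] : exists i0, true && (0 < w i0).
  by apply: (psumr_neq0P (fun j _ => w_ge0 j)); rewrite sum_w.
have [i _ w_max] := arg_maxP w (isT : predT i0).
set v : zvec E := [ffun j => w j - eunit i j].
have Ew : w = vadd v (eunit i) by apply/ffunP => j; rewrite !ffunE subrK.
have v_eq j : v j = w j - ((j == i) : nat)%:Z by rewrite !ffunE in_set1.
have v_ge0 j : 0 <= v j.
  by rewrite v_eq; have := w_max i0 isT; have := w_ge0 j; case: eqP => [->|]; lia.
have sum_v : \sum_j v j = n%:Z.
  have := congr1 (dot (one_vec E)) Ew.
  by rewrite dot_vaddr dot_eunitr !dot_onel sum_w ffunE in_setT; lia.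
have v_max j : v j <= v i + 1.
  by rewrite !v_eq eqxx; have := w_max j isT; case: (j == i); lia.
have -> : vadd y w = vadd (vadd y v) (eunit i).
  by rewrite Ew; apply/ffunP => j; rewrite !ffunE addrA.
move=> HB_step; have [B' HB' B'_weight] := flock_step v_max HB_step.
rewrite -Ew in B'_weight; rewrite /eunit (proj2 gM).
by have := IH v v_ge0 sum_v y B' HB'; lia.
Qed.

Lemma basis_subgradient alpha B : B \in M alpha -> LF_argmax g (eI B) alpha.
Proof.
move=> HB y; set k := (\max_j `|alpha j - y j|)%N.
have k_ge j : (`|alpha j - y j| <= k)%N.
  exact: (@leq_bigmax_cond _ predT (fun j => `|alpha j - y j|%N)).
set y' : zvec E := [ffun j => y j - k%:Z].
set w : zvec E := [ffun j => alpha j - y' j].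
have w_ge0 j : 0 <= w j by rewrite !ffunE; have := k_ge j; lia.
have -> : g y = g y' + (k * d)%:Z.
  by rewrite -g_add_const; congr g; apply/ffunP => j; rewrite !ffunE subrK.
have := g_increment_le w_ge0 (y := y') (B := B).
have -> : vadd y' w = alpha by apply/ffunP => j; rewrite !ffunE; lia.
move=> /(_ HB); suff -> : dot (eI B) w = dot (eI B) alpha - dot (eI B) y + (k * d)%:Z by lia.
rewrite !dot_eIl -(card_basis HB) (eq_bigr (fun j => alpha j - y j + k%:Z)) => [|j _].
  by rewrite big_split sumrB sumr_const -mulr_natr natz PoszM.
by rewrite !ffunE; lia.
Qed.

Lemma LF_argmax_dot_le_rank alpha omega I :
  LF_argmax g omega alpha -> dot omega (eI I) <= (mrank (M alpha) I)%:Z.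
Proof. by move=> amax; have := amax (vadd alpha (eI I)); rewrite dot_vaddr (proj2 gM); lia. Qed.

Lemma LF_argmax_rank_le_dot alpha omega I :
  LF_argmax g omega alpha -> exists a, (mrank (M a) I)%:Z <= dot omega (eI I).
Proof.
move=> amax; set a : zvec E := [ffun j => alpha j - eI I j]; exists a.
have Ealpha : vadd a (eI I) = alpha by apply/ffunP => j; rewrite !ffunE subrK.
by have := amax a; have := proj2 gM a I; have := dot_vaddr omega a (eI I); rewrite Ealpha; lia.
Qed.

Lemma LF_argmax_basis alpha omega :
  LF_argmax g omega alpha -> exists2 B, B \in M alpha & omega = eI B.
Proof.
move=> amax; have omega01 j : 0 <= omega j <= 1.
  have [a] := LF_argmax_rank_le_dot [set j] amax.
  have := LF_argmax_dot_le_rank [set j] amax; rewrite -/(eunit j) dot_eunitr.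
  by have := mrank_le_card (M alpha) [set j]; rewrite cards1; lia.
set B := [set j | omega j == 1].
have Eomega : omega = eI B.
  by apply/ffunP => j; rewrite ffunE inE; have := omega01 j; case: eqP => [-> //|]; lia.
rewrite Eomega in amax *; exists B => //.
apply: (independent_spanning_basis (d := d) (bases_neq0 alpha)) => [B'||].
- exact: card_basis.
- by have := LF_argmax_dot_le_rank B amax; rewrite dot_eI setIid; lia.
- by have [a] := LF_argmax_rank_le_dot setT amax; rewrite dot_eI setIT mrankT; lia.
Qed.

End Flock.

Theorem mainTheorem13 (E : finType) (d : nat) (M : zvec E -> {set {set E}})
  (g : zvec E -> int) (alpha omega : zvec E) :
  matroid_flock d M -> is_gM M g ->
  (Some (dot omega alpha) = omap (fun v => v + g alpha) (LFdual g omega)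
   <-> exists2 B, B \in M alpha & omega = eI B).
Proof.
move=> flock gM; rewrite LFdual_attainedP; split; first exact: (LF_argmax_basis flock gM).
by case=> B HB ->; exact: (basis_subgradient flock gM).
Qed.
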